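(* For $g\geq1$ and $d\geq2$, $\mathcal{S}_g[d]$ is the normal closure in $\mathrm{urSp}(2g)$ of $Y_{1,1}^d$.
   Context: $\mathrm{urSp}(2g)$ is the subgroup of $\mathrm{Sp}(2g,\mathbb{Z})$ (defined via $J=\begin{pmatrix}0&I_g\\-I_g&0\end{pmatrix}$) consisting of matrices $\begin{pmatrix}A&B\\0&{}^tA^{-1}\end{pmatrix}$ with $A\in\mathrm{GL}(g,\mathbb{Z})$ and $A^{-1}B$ symmetric. $\mathcal{S}_g=\left\{\begin{pmatrix}I_g&B\\0&I_g\end{pmatrix} : B\text{ integral symmetric}\right\}$, and $\mathcal{S}_g[d]$ is the kernel of the restriction to $\mathcal{S}_g$ of the reduction map $\mathrm{Sp}(2g,\mathbb{Z})\to\mathrm{Sp}(2g,\mathbb{Z}/d\mathbb{Z})$ (i.e. those with $B\equiv0\bmod d$). $Y_{1,1}=\begin{pmatrix}I_g&S_{1,1}\\0&I_g\end{pmatrix}$ where $S_{1,1}$ is the $g\times g$ matrix with $(1,1)$-entry $1$ and other entries $0$. *)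

From HB Require Import structures.
From mathcomp Require Import all_boot all_order all_algebra.
Set Implicit Arguments. Unset Strict Implicit. Unset Printing Implicit Defensive.
Import GRing.Theory Num.Theory.
Local Open Scope ring_scope.

Definition Jmx (g : nat) : 'M[int]_(g + g) := block_mx 0 1%:M (- 1%:M) 0.

Definition Sp (g : nat) (M : 'M[int]_(g + g)) : Prop :=
  M^T *m Jmx g *m M = Jmx g.

Definition urSp (g : nat) (M : 'M[int]_(g + g)) : Prop :=
  Sp M /\
  exists (A B : 'M[int]_g),
    [/\ A \in unitmx, (invmx A *m B)^T = invmx A *m B &
        M = block_mx A B 0 (invmx A)^T].

Definition Sg (g : nat) (M : 'M[int]_(g + g)) : Prop :=
  exists B : 'M[int]_g, B^T = B /\ M = block_mx 1%:M B 0 1%:M.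

(* S_g[d]: kernel of the reduction mod d restricted to S_g,
   i.e. M in S_g with M = I entrywise mod d. *)
Definition Sgd (g d : nat) (M : 'M[int]_(g + g)) : Prop :=
  Sg M /\ forall i j, (d%:Z %| (M - 1%:M) i j)%Z.

(* S_{1,1}: (1,1) entry 1, all others 0 (indices are 0-based here) *)
Definition S11 (g : nat) : 'M[int]_g :=
  \matrix_(i, j) ((nat_of_ord i == 0%N) && (nat_of_ord j == 0%N))%:R.

Definition Y11 (g : nat) : 'M[int]_(g + g) := block_mx 1%:M (S11 g) 0 1%:M.

Definition mxpow (n : nat) (M : 'M[int]_n) (k : nat) : 'M[int]_n :=
  iter k (mulmx M) 1%:M.

Inductive nclosure (n : nat) (G : 'M[int]_n -> Prop) (s : 'M[int]_n)
  : 'M[int]_n -> Prop :=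
| ncl_conj : forall h, G h -> nclosure G s (h *m s *m invmx h)
| ncl_one : nclosure G s 1%:M
| ncl_mul : forall a b, nclosure G s a -> nclosure G s b -> nclosure G s (a *m b)
| ncl_inv : forall a, nclosure G s a -> nclosure G s (invmx a).

(* Conjugating [[I, X], [0, I]] by [[A, B], [0, A^-T]] in urSp(2g) gives
   [[I, A X A^T], [0, I]]. Hence the normal closure of Y11^d = [[I, d S11], [0, I]]
   consists of matrices [[I, d C], [0, I]] with C symmetric, i.e. lies in S_g[d].
   Conversely, the X with [[I, d X], [0, I]] in the closure form an additive group
   containing (A e_0)(A e_0)^T for every A in GL(g, Z). Since every e_i and every
   e_i + e_j (i <> j) is a first column of some A in GL(g, Z), this group contains
   the e_i e_i^T and e_i e_j^T + e_j e_i^T, which span the symmetric matrices. *)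

From mathcomp Require Import all_boot all_order all_algebra.
Set Implicit Arguments. Unset Strict Implicit. Unset Printing Implicit Defensive.
Import GRing.Theory.
Local Open Scope ring_scope.

Lemma mulmx1_invmx (R : comUnitRingType) n (A B : 'M[R]_n) :
  A *m B = 1%:M -> invmx A = B.
Proof.
move=> AB; have [uA _] := mulmx1_unit AB.
by rewrite -[invmx A]mulmx1 -AB mulmxA mulVmx // mul1mx.
Qed.

Section ShearMatrices.

Variables (R : comUnitRingType) (n : nat).
Implicit Types A B X Y : 'M[R]_n.

Definition shear_mx X : 'M[R]_(n + n) := block_mx 1%:M X 0 1%:M.

Lemma shear_mx0 : shear_mx 0 = 1%:M.
Proof. by rewrite /shear_mx -scalar_mx_block. Qed.

Lemma shear_mxD X Y : shear_mx X *m shear_mx Y = shear_mx (X + Y).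
Proof.
by rewrite /shear_mx mulmx_block !mul1mx !mul0mx !mulmx0 !mulmx1 !addr0 add0r addrC.
Qed.

Lemma invmx_shear_mx X : invmx (shear_mx X) = shear_mx (- X).
Proof. by apply: mulmx1_invmx; rewrite shear_mxD subrr shear_mx0. Qed.

Lemma shear_mx_sub1 X : shear_mx X - 1%:M = block_mx 0 X 0 0.
Proof.
rewrite /shear_mx [X in _ - X]scalar_mx_block opp_block_mx add_block_mx.
by rewrite !subrr oppr0 !addr0.
Qed.

Definition ursp_mx A B : 'M[R]_(n + n) := block_mx A B 0 (invmx A)^T.

Lemma invmx_ursp_mx A B : A \in unitmx ->
  invmx (ursp_mx A B) = block_mx (invmx A) (- (invmx A *m B *m A^T)) 0 A^T.
Proof.
move=> uA; apply: mulmx1_invmx.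
rewrite mulmx_block !mul0mx !mulmx0 !addr0 add0r -trmx_mul !mulmxV //.
by rewrite trmx1 mulmxN !mulmxA mulmxV // mul1mx addNr -scalar_mx_block.
Qed.

Lemma conj_shear_mx A B X : A \in unitmx ->
  ursp_mx A B *m shear_mx X *m invmx (ursp_mx A B) = shear_mx (A *m X *m A^T).
Proof.
move=> uA; rewrite invmx_ursp_mx // /shear_mx !mulmx_block.
rewrite !mulmx1 !mulmx0 !mul0mx !addr0 !add0r.
rewrite -trmx_mul !mulmxV // trmx1; congr block_mx; rewrite ?mul0mx ?add0r //.
by rewrite mulmxN !mulmxA mulmxV // mul1mx mulmxDl addrC addrK.
Qed.

End ShearMatrices.

Lemma urSp_ursp_mx g (A : 'M[int]_g) : A \in unitmx -> urSp (ursp_mx A 0).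
Proof.
move=> uA; split; last by exists A, 0; rewrite mulmx0 trmx0.
rewrite /Sp /Jmx /ursp_mx tr_block_mx trmx0 trmxK !mulmx_block.
congr block_mx; rewrite !(mul0mx, mulmx0, mulmx1, addr0, add0r) //.
  by rewrite -trmx_mul mulVmx // trmx1.
by rewrite mulmxN mulmx1 mulNmx mulVmx.
Qed.

Lemma tr_S11 g : (S11 g)^T = S11 g.
Proof. by apply/matrixP => i j; rewrite !mxE andbC. Qed.

Lemma mxpow_Y11 g k : mxpow (Y11 g) k = shear_mx (k%:Z *: S11 g).
Proof.
elim: k => [|k IHk]; first by rewrite scale0r shear_mx0.
by rewrite /= IHk shear_mxD -add1n PoszD scalerDl scale1r.
Qed.

Definition ncl_shear g d (X : 'M[int]_g) : Prop :=
  nclosure (@urSp g) (mxpow (Y11 g) d) (shear_mx (d%:Z *: X)).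

Section NormalClosure.

Variables (g d : nat).
Implicit Types X Y : 'M[int]_g.

Lemma ncl_shear0 : ncl_shear d (0 : 'M[int]_g).
Proof. by rewrite /ncl_shear scaler0 shear_mx0; exact: ncl_one. Qed.

Lemma ncl_shearD X Y : ncl_shear d X -> ncl_shear d Y -> ncl_shear d (X + Y).
Proof. by rewrite /ncl_shear scalerDr -shear_mxD; exact: ncl_mul. Qed.

Lemma ncl_shearN X : ncl_shear d X -> ncl_shear d (- X).
Proof. by rewrite /ncl_shear scalerN -invmx_shear_mx; exact: ncl_inv. Qed.

Lemma ncl_shearZ z X : ncl_shear d X -> ncl_shear d (z *: X).
Proof.
move=> hX; have ncl_natZ k : ncl_shear d (k%:Z *: X).
  elim: k => [|k IHk]; first by rewrite scale0r; exact: ncl_shear0.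
  by rewrite -add1n PoszD scalerDl scale1r; exact: ncl_shearD.
by case: z => k; rewrite ?NegzE ?scaleNr; [|apply: ncl_shearN]; exact: ncl_natZ.
Qed.

Lemma ncl_shear_sum (I : finType) (F : I -> 'M[int]_g) :
  (forall i, ncl_shear d (F i)) -> ncl_shear d (\sum_i F i).
Proof.
by move=> hF; apply: big_ind => //; [exact: ncl_shear0 | exact: ncl_shearD].
Qed.

Lemma ncl_shear_conj A : A \in unitmx -> ncl_shear d (A *m S11 g *m A^T).
Proof.
move=> uA; rewrite /ncl_shear scalemxAl scalemxAr -(conj_shear_mx 0 _ uA).
by rewrite -mxpow_Y11; apply: ncl_conj; exact: urSp_ursp_mx.
Qed.

End NormalClosure.

Section FirstColumns.

Variables (R : comUnitRingType) (n : nat).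

Definition basis_cv (i : 'I_n.+1) : 'cV[R]_n.+1 := delta_mx i 0.

Definition elem_mx (k l : 'I_n.+1) (c : R) : 'M[R]_n.+1 := 1%:M + c *: delta_mx k l.

Lemma elem_mx_unit k l c : k != l -> elem_mx k l c \in unitmx.
Proof.
move=> kl; suff /mulmx1_unit[] : elem_mx k l c *m elem_mx k l (- c) = 1%:M by [].
rewrite /elem_mx mulmxDl !mulmxDr !mul1mx !mulmx1 -!scalemxAl -!scalemxAr.
by rewrite mul_delta_mx_0 1?eq_sym // !scaler0 addr0 scaleNr subrK.
Qed.

Lemma elem_mx_basis k l c m :
  elem_mx k l c *m basis_cv m = basis_cv m + c *: (basis_cv k *+ (l == m)).
Proof. by rewrite /elem_mx mulmxDl mul1mx -scalemxAl mul_delta_mx_cond. Qed.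

Definition gl_col (v : 'cV[R]_n.+1) :=
  exists2 A : 'M_n.+1, A \in unitmx & v = A *m basis_cv 0.

Lemma gl_col_mul A v : A \in unitmx -> gl_col v -> gl_col (A *m v).
Proof.
move=> uA [B uB ->]; exists (A *m B); last by rewrite mulmxA.
by rewrite unitmx_mul uA uB.
Qed.

Lemma gl_col_basis i : gl_col (basis_cv i).
Proof.
have gl_col0 : gl_col (basis_cv 0) by exists 1%:M; rewrite ?unitmx1 ?mul1mx.
have [-> // | i0] := eqVneq i 0; have i0' : 0 != i by rewrite eq_sym.
(* e_0 becomes e_0 + e_i, and then e_i, under two transvections. *)
have := gl_col_mul (elem_mx_unit (- 1) i0') (gl_col_mul (elem_mx_unit 1 i0) gl_col0).
rewrite elem_mx_basis eqxx mulr1n scale1r mulmxDr !elem_mx_basis eqxx (negbTE i0).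
by rewrite mulr0n scaler0 addr0 mulr1n scaleN1r addrC subrK.
Qed.

Lemma gl_col_basisD i j : i != j -> gl_col (basis_cv i + basis_cv j).
Proof.
move=> ij; have ji : j != i by rewrite eq_sym.
have := gl_col_mul (elem_mx_unit 1 ji) (gl_col_basis i).
by rewrite elem_mx_basis eqxx mulr1n scale1r.
Qed.

End FirstColumns.

Arguments basis_cv {R n} i.
Arguments gl_col_basis {R n} i.
Arguments gl_col_basisD {R n i j}.

Definition strict_upper (R : nmodType) n (X : 'M[R]_n) : 'M[R]_n :=
  \matrix_(i, j) (if (i < j)%N then X i j else 0).

Lemma sym_mx_split (R : pzRingType) n (X : 'M[R]_n) : X^T = X ->
  X = strict_upper X + (strict_upper X)^T + diag_mx (\row_i X i i).
Proof.
move=> sX; apply/matrixP => i j; rewrite !mxE.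
have Xji : X j i = X i j by rewrite -{1}sX mxE.
case: (ltngtP i j) => [lt_ij | lt_ji | /val_inj <-].
- by rewrite (ltn_eqF lt_ij : (i == j) = false) mulr0n !addr0.
- by rewrite (gtn_eqF lt_ji : (i == j) = false) mulr0n Xji add0r addr0.
- by rewrite eqxx mulr1n !add0r.
Qed.

Section SymmetricGenerators.

Variables (g d : nat).
Implicit Types X Y : 'M[int]_g.+1.

Lemma S11_basis : S11 g.+1 = basis_cv 0 *m (basis_cv 0)^T.
Proof.
by rewrite /basis_cv trmx_delta mul_delta_mx; apply/matrixP => i j; rewrite !mxE.
Qed.

Lemma ncl_shear_gl_col (v : 'cV[int]_g.+1) : gl_col v -> ncl_shear d (v *m v^T).
Proof.
case=> A uA ->; rewrite trmx_mul !mulmxA -[A *m _ *m _]mulmxA -S11_basis.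
exact: ncl_shear_conj.
Qed.

Lemma ncl_shear_delta i : ncl_shear d (delta_mx i i : 'M[int]_g.+1).
Proof.
rewrite -(mul_delta_mx (0 : 'I_1) i i) -[delta_mx 0 i]trmx_delta.
by apply: ncl_shear_gl_col; exact: gl_col_basis.
Qed.

Lemma ncl_shear_delta_sym i j :
  ncl_shear d (delta_mx i j + delta_mx j i : 'M[int]_g.+1).
Proof.
have [<- | ij] := eqVneq i j; first by apply: ncl_shearD; exact: ncl_shear_delta.
have := ncl_shear_gl_col (gl_col_basisD ij).
rewrite raddfD /= mulmxDl !mulmxDr /basis_cv !trmx_delta !mul_delta_mx => hv.
set a : 'M[int]_g.+1 := delta_mx i i; set b : 'M[int]_g.+1 := delta_mx j j.
have -> : delta_mx i j + delta_mx j i =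
    a + delta_mx i j + (delta_mx j i + b) - a - b.
  by rewrite addrA (addrAC _ (- a)) addrK -(addrA a) addrC addKr.
apply: ncl_shearD; last exact: ncl_shearN (ncl_shear_delta j).
by apply: ncl_shearD; last exact: ncl_shearN (ncl_shear_delta i).
Qed.

Lemma ncl_shear_diag (r : 'rV[int]_g.+1) : ncl_shear d (diag_mx r).
Proof.
rewrite diag_mx_sum_delta; apply: ncl_shear_sum => i.
by apply: ncl_shearZ; exact: ncl_shear_delta.
Qed.

Lemma ncl_shear_addtr Y : ncl_shear d (Y + Y^T).
Proof.
have -> : Y + Y^T = \sum_i \sum_j Y i j *: (delta_mx i j + delta_mx j i).
  rewrite {1}(matrix_sum_delta Y) {1}(matrix_sum_delta Y^T).
  under [X in _ + X]eq_bigr do under eq_bigr do rewrite mxE.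
  rewrite [X in _ + X]exchange_big /= -big_split /=.
  by apply: eq_bigr => i _; rewrite -big_split; apply: eq_bigr => j _; rewrite scalerDr.
apply: ncl_shear_sum => i; apply: ncl_shear_sum => j.
by apply: ncl_shearZ; exact: ncl_shear_delta_sym.
Qed.

Lemma ncl_shear_sym X : X^T = X -> ncl_shear d X.
Proof.
move/sym_mx_split->.
by apply: ncl_shearD; [exact: ncl_shear_addtr | exact: ncl_shear_diag].
Qed.

End SymmetricGenerators.

Definition sym_shear g d (M : 'M[int]_(g + g)) :=
  exists2 C : 'M[int]_g, C^T = C & M = shear_mx (d%:Z *: C).

Lemma Sgd_sym_shear g d M : @Sgd g d M <-> sym_shear d M.
Proof.
split=> [[[B [sB ->]] dvd_d] | [C sC ->]].
  have dB i j : (d%:Z %| B i j)%Z.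
    by have := dvd_d (lshift g i) (rshift g j); rewrite shear_mx_sub1 block_mxEur.
  exists (\matrix_(i, j) (B i j %/ d%:Z)%Z).
    by apply/matrixP => i j; rewrite !mxE -{1}sB mxE.
  by congr shear_mx; apply/matrixP => i j; rewrite !mxE mulrC divzK.
split; first by exists (d%:Z *: C); rewrite linearZ /= sC.
move=> i j; rewrite shear_mx_sub1 -[i]splitK -[j]splitK.
case: (split i) => a; case: (split j) => b /=;
  rewrite ?block_mxEul ?block_mxEur ?block_mxEdl ?block_mxEdr !mxE ?dvdz0 //.
exact: dvdz_mulr.
Qed.

Lemma nclosure_sym_shear g d M :
  nclosure (@urSp g) (mxpow (Y11 g) d) M -> sym_shear d M.
Proof.
elim=> {M} [h [_ [A [B [uA _ ->]]]] | |
             _ _ _ [C1 sC1 ->] _ [C2 sC2 ->] | _ _ [C sC ->]].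
- rewrite mxpow_Y11 -[block_mx _ _ _ _]/(ursp_mx A B) conj_shear_mx //.
  exists (A *m S11 g *m A^T); last by rewrite scalemxAl scalemxAr.
  by rewrite !trmx_mul trmxK tr_S11 mulmxA.
- by exists 0; rewrite ?trmx0 // scaler0 shear_mx0.
- by exists (C1 + C2); [rewrite raddfD /= sC1 sC2 | rewrite shear_mxD scalerDr].
- by exists (- C); [rewrite raddfN /= sC | rewrite invmx_shear_mx scalerN].
Qed.

Lemma sym_shear_nclosure g d M :
  sym_shear d M -> nclosure (@urSp g) (mxpow (Y11 g) d) M.
Proof.
case: g M => [M _ | g M [C sC ->]]; last exact: ncl_shear_sym.
by rewrite (_ : M = 1%:M); [exact: ncl_one | apply/matrixP => -[]].
Qed.

Theorem corollary3p9 (g d : nat) (hg : (1 <= g)%N) (hd : (2 <= d)%N)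
  (M : 'M[int]_(g + g)) :
  Sgd d M <-> nclosure (@urSp g) (mxpow (Y11 g) d) M.
Proof.
apply: iff_trans (Sgd_sym_shear d M) _.
by split; [exact: sym_shear_nclosure | exact: nclosure_sym_shear].
Qed.
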